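(* Let $\Theta\subset\mathbb R^m$ be compact. For each $\theta\in\Theta$ let $f_\theta:S_{\pi_0}\to\mathbb R$ be bounded and measurable. Assume (i) for $d_0$-a.e. $x$ and every $\theta\in\Theta$, the map $a\mapsto f_\theta(x,a)$ is continuous on $S_x$; and (ii) the map $\Theta\to\ell_\infty(S_{\pi_0})$, $\theta\mapsto f_\theta$, is continuous. Define \[ R_\theta(x,a):=f_\theta(x,a)-\mathbb E_{A\sim\pi_0(\cdot\mid x)}[f_\theta(x,A)]. \] Then $\mathcal F^{\mathrm{nn}}_\Theta:=\{R_\theta:\theta\in\Theta\}$ is compact under $\|\cdot\|_{\infty,\mathrm{supp}(\pi_0)}$, and for every $\theta\in\Theta$ the map $a\mapsto R_\theta(x,a)$ is continuous on $S_x$ for $d_0$-a.e. $x$.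
   Context: $\mathcal X$ is a measurable space with probability distribution $d_0$; $\mathcal A$ is a separable metric space; $\pi_0:\mathcal X\to\Delta(\mathcal A)$ is a Markov kernel. $S_x:=\mathrm{supp}(\pi_0(\cdot\mid x))$ is the topological support, $S_{\pi_0}:=\{(x,a):a\in S_x\}$, $\ell_\infty(S_{\pi_0})$ is the space of bounded functions on $S_{\pi_0}$ with the sup norm, and $\|f\|_{\infty,\mathrm{supp}(\pi_0)}:=\sup_{(x,a)\in S_{\pi_0}}|f(x,a)|$. *)

From HB Require Import structures.
From mathcomp Require Import all_boot all_order all_algebra.
From mathcomp Require Import all_classical all_reals all_analysis.
Set Implicit Arguments. Unset Strict Implicit. Unset Printing Implicit Defensive.
Import Order.TTheory GRing.Theory Num.Theory.
Import numFieldNormedType.Exports.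
Local Open Scope classical_set_scope.
Local Open Scope ring_scope.

Definition borelT (T : ptopologicalType) := g_sigma_algebraType (@open T).

Definition separable (T : topologicalType) :=
  exists D : set T, countable D /\ dense D.

Definition supp (R : realType) (T : ptopologicalType)
  (mu : {measure set (borelT T) -> \bar R}) : set T :=
  [set a : T | forall U : set T, open U -> U a -> (0 < mu U)%E].

Definition Spi (R : realType) d (X : measurableType d) (T : ptopologicalType)
  (pi0 : R.-pker X ~> borelT T) : set (X * T) :=
  [set p | supp (pi0 p.1) p.2].

Definition supdist (R : realType) (X T : Type) (S : set (X * T))
  (g h : X -> T -> R) : \bar R :=
  ereal_sup [set (`|g p.1 p.2 - h p.1 p.2|)%:E | p in S].

Definition supopen (R : realType) (X T : Type) (S : set (X * T))
  (U : set (X -> T -> R)) :=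
  forall g, U g -> exists2 e : R, 0 < e &
    forall h, (supdist S g h < e%:E)%E -> U h.

Definition supcompact (R : realType) (X T : Type) (S : set (X * T))
  (F : set (X -> T -> R)) :=
  forall (I : Type) (U : I -> set (X -> T -> R)),
    (forall i, supopen S (U i)) -> F `<=` \bigcup_i U i ->
    exists2 J : set I, finite_set J & F `<=` \bigcup_(i in J) U i.

(* R_theta(x,a) = f_theta(x,a) - E_{A ~ pi0(.|x)} f_theta(x,A)
   (the expectation is taken over the support S_x, where f_theta is defined). *)
Definition resid (R : realType) d (X : measurableType d) (T : ptopologicalType)
  (pi0 : R.-pker X ~> borelT T) (Th : Type) (f : Th -> X -> T -> R)
  (th : Th) (x : X) (a : T) : R :=
  f th x a - Rintegral (pi0 x) (supp (pi0 x)) (f th x : borelT T -> R).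

From HB Require Import structures.
From mathcomp Require Import all_boot all_order all_algebra.
From mathcomp Require Import all_classical all_reals all_analysis.
From mathcomp Require Import lra finmap.
Set Implicit Arguments. Unset Strict Implicit. Unset Printing Implicit Defensive.
Import Order.TTheory GRing.Theory Num.Theory.
Import numFieldNormedType.Exports.
Local Open Scope classical_set_scope.
Local Open Scope ring_scope.

(* R_th differs from f_th by a quantity depending on x only, so continuity in
   a is inherited.  Averaging against a probability is 1-Lipschitz for the sup
   norm, so ||R_th - R_th'|| <= 2 ||f_th - f_th'||: the map th |-> R_th is
   continuous into the sup-norm space and the image of the compact set Theta is
   compact. *)

Lemma supp_closed (R : realType) (T : ptopologicalType)
  (mu : {measure set (borelT T) -> \bar R}) : closed (supp mu).
Proof.
rewrite -[supp mu]setCK closedC openE => a /= Na.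
have [U [oU Ua nU]] : exists U : set T, [/\ open U, U a & ~ (0 < mu U)%E].
  apply: contra_notP Na => noU V oV Va.
  by apply: contra_notP noU => nV; exists V.
apply: (@filterS _ _ _ U); last by apply: open_nbhs_nbhs; split.
by move=> b Ub suppb; apply: nU; exact: suppb.
Qed.

Lemma supp_measurable (R : realType) (T : ptopologicalType)
  (mu : {measure set (borelT T) -> \bar R}) :
  measurable (supp mu : set (borelT T)).
Proof.
rewrite -[supp mu]setCK; apply: measurableC; apply: sub_sigma_algebra.
by rewrite /= openC; exact: supp_closed.
Qed.

Lemma normr_le_bounded (R : realType) (T : Type) (D : set T) (k : T -> R)
  (M : R) : (forall a, D a -> `|k a| <= M) -> [bounded k a | a in D].
Proof.
move=> kM; apply: sub_boundedl (bounded_cst M D) => a Da.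
exact: le_trans (kM a Da) (ler_norm M).
Qed.

Lemma le_normr_RintegralB (R : realType) d (T : measurableType d)
  (mu : {measure set T -> \bar R}) (D : set T) (g h : T -> R) (Mg Mh e : R) :
  measurable D -> (mu D <= 1)%E ->
  measurable_fun D g -> measurable_fun D h ->
  (forall a, D a -> `|g a| <= Mg) -> (forall a, D a -> `|h a| <= Mh) ->
  0 <= e -> (forall a, D a -> `|g a - h a| <= e) ->
  `|Rintegral mu D g - Rintegral mu D h| <= e.
Proof.
move=> mD muD1 mg mh gM hM e0 ghe.
have muDfin : (mu D < +oo)%E by apply: le_lt_trans muD1 _; exact: ltey.
have ig : mu.-integrable D (EFin \o g).
  by apply: measurable_bounded_integrable => //; exact: normr_le_bounded gM.
have ih : mu.-integrable D (EFin \o h).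
  by apply: measurable_bounded_integrable => //; exact: normr_le_bounded hM.
have ie : mu.-integrable D (EFin \o cst e).
  by apply: measurable_bounded_integrable => //; exact: bounded_cst.
have igh := integrableB mD ig ih.
rewrite -RintegralB //; apply: le_trans (le_normr_Rintegral mD igh) _.
apply: le_trans (le_Rintegral mD (integrable_norm igh) ie ghe) _.
rewrite Rintegral_cst // -[leRHS]mulr1 ler_wpM2l //.
by move: muD1; case: (mu D) => [r| |] //=; rewrite lee_fin.
Qed.

Section supdist.
Context (R : realType) (X Y : Type) (S : set (X * Y)).

Lemma supdist_ubound (g h : X -> Y -> R) x y :
  S (x, y) -> (`|g x y - h x y|%:E <= supdist S g h)%E.
Proof. by move=> Sxy; apply: ereal_sup_ubound; exists (x, y). Qed.

Lemma ge_supdist (g h : X -> Y -> R) (e : R) :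
  (forall x y, S (x, y) -> `|g x y - h x y| <= e) ->
  (supdist S g h <= e%:E)%E.
Proof.
by move=> ghe; apply: ge_ereal_sup => _ [[x y] /= Sxy <-]; rewrite lee_fin ghe.
Qed.

Lemma supcompact_image (T : ptopologicalType) (K : set T)
  (F : T -> X -> Y -> R) : compact K ->
  (forall t, K t -> forall e : R, 0 < e ->
     \forall t' \near t, K t' -> (supdist S (F t) (F t') < e%:E)%E) ->
  supcompact S (F @` K).
Proof.
move=> cK Fcont I U Uopen KU.
have [[t0 Kt0]|K0] := pselect (exists t, K t); last first.
  by exists set0 => // _ [t Kt <-]; case: K0; exists t.
have [i0 _ _] := KU (F t0) (imageP _ Kt0).
have local t : exists p : I * set T, K t ->
    [/\ open p.2, p.2 t & forall t', K t' -> p.2 t' -> U p.1 (F t')].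
  have [Kt|nKt] := pselect (K t); last by exists (i0, setT) => /nKt.
  have [i _ Ui] := KU (F t) (imageP _ Kt).
  have [e e0 eU] := Uopen i _ Ui.
  have : nbhs t _ := Fcont t Kt e e0; rewrite nbhsE => -[W [oW Wt] WF].
  by exists (i, W) => _; split => // t' Kt' Wt'; apply: eU; exact: WF.
have [p pP] := choice local.
have : cover_compact K by rewrite -compact_cover.
case/(_ _ K (fun t => (p t).2)) => [||D DK KD].
- by move=> t Kt; case: (pP t Kt).
- by move=> t Kt; exists t => //; case: (pP t Kt).
exists ((fun t => (p t).1) @` [set` D]); first exact/finite_image/finite_fset.
move=> _ [t Kt <-]; have [t1 Dt1 Wt] := KD t Kt.
have /set_mem Kt1 := DK t1 Dt1.
by exists (p t1).1; [exists t1 | case: (pP t1 Kt1) => _ _; apply].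
Qed.

End supdist.

Lemma supdist_resid_le (R : realType) d (X : measurableType d)
  (T : ptopologicalType) (pi0 : R.-pker X ~> borelT T) (Th : Type)
  (f : Th -> X -> T -> R) (th th' : Th) (e : R) : 0 <= e ->
  (exists M, forall x a, supp (pi0 x) a -> `|f th x a| <= M) ->
  (exists M, forall x a, supp (pi0 x) a -> `|f th' x a| <= M) ->
  (forall x, measurable_fun (supp (pi0 x) : set (borelT T))
                            (f th x : borelT T -> R)) ->
  (forall x, measurable_fun (supp (pi0 x) : set (borelT T))
                            (f th' x : borelT T -> R)) ->
  (supdist (Spi pi0) (f th) (f th') <= e%:E)%E ->
  (supdist (Spi pi0) (resid pi0 f th) (resid pi0 f th') <= (e *+ 2)%:E)%E.
Proof.
move=> e0 [M fM] [M' fM'] mf mf' fe.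
have fclose x a : supp (pi0 x) a -> `|f th x a - f th' x a| <= e.
  by move=> xa; rewrite -lee_fin; apply: le_trans fe; exact: supdist_ubound.
apply: ge_supdist => x a xa; rewrite /resid mulr2n.
rewrite [E in `|E|](_ : forall u v w z : R, u - v - (w - z) = u - w - (v - z));
  last by move=> *; lra.
apply: le_trans (ler_normB _ _) (lerD (fclose _ _ xa) _).
apply: (le_normr_RintegralB (Mg := M) (Mh := M')) => //.
- exact: supp_measurable.
- rewrite -(prob_kernel (s := pi0) x).
  apply: le_measure => //; apply/mem_set; last exact: measurableT.
  exact: supp_measurable.
- exact: fM.
- exact: fM'.
- exact: fclose.
Qed.

Theorem proposition2 (R : realType) (d : measure_display) (X : measurableType d)
  (d0 : probability X R)
  (A : pseudoPMetricType R) (hA : hausdorff_space A) (sepA : separable A)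
  (pi0 : R.-pker X ~> borelT A)
  (m : nat) (Theta : set 'rV[R]_m) (cTheta : compact Theta)
  (f : 'rV[R]_m -> X -> A -> R)
  (f_bdd : forall th, Theta th ->
     exists M : R, forall x a, supp (pi0 x) a -> `|f th x a| <= M)
  (f_meas : forall th, Theta th -> forall x,
     measurable_fun (supp (pi0 x) : set (borelT A)) (f th x : borelT A -> R))
  (f_cont : {ae d0, forall x, forall th, Theta th ->
     {within supp (pi0 x), continuous (f th x)}})
  (f_Theta : forall th, Theta th -> forall e : R, 0 < e ->
     exists2 delta : R, 0 < delta & forall th', Theta th' ->
       `|th - th'| < delta -> (supdist (Spi pi0) (f th) (f th') < e%:E)%E) :
  supcompact (Spi pi0) [set resid pi0 f th | th in Theta] /\
  (forall th, Theta th -> {ae d0, forall x,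
     {within supp (pi0 x), continuous (resid pi0 f th x)}}).
Proof.
split; last first.
  move=> th Th; apply: filterS f_cont => x /(_ th Th) fcont a.
  by apply: cvgB; [exact: fcont | exact: cvg_cst].
apply: supcompact_image => // th Th e e0.
have e30 : 0 < e / 3 by rewrite divr_gt0.
have [dl dl0 fclose] := f_Theta th Th _ e30.
apply/nbhs_normP; exists dl => // th' /= th'th Th'.
apply: le_lt_trans (supdist_resid_le (ltW e30) (f_bdd _ Th) (f_bdd _ Th')
  (f_meas _ Th) (f_meas _ Th') (ltW (fclose _ Th' th'th))) _.
by rewrite lte_fin mulr2n; lra.
Qed.
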